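(* Let $f=\frac{1}{m}\sum_{i=1}^m f^i$ where each $f^i:\mathbb{R}^n\to\mathbb{R}$ is differentiable. For $1\le k\le m$ let $G_k=\frac{1}{k}\sum_{j=1}^k\nabla f^{i_j}$ be the mini-batch estimator of size $k$, where $\{i_1,\dots,i_k\}$ is a $k$-element subset of $\{1,\dots,m\}$ chosen uniformly at random. Let $\|\cdot\|$ be any norm on $\mathbb{R}^n$ and fix $x\in\mathbb{R}^n$. Then $\mathbb{E}[\|G_k(x)\|]$ is non-increasing in $k$, and for $1\le k\le m-1$, $$\mathbb{E}[\|G_k(x)\|]\le\frac{m}{k}\|\nabla f(x)\|+\frac{m-k}{k}\,\mathbb{E}[\|G_{m-k}(x)\|].$$ *)

From HB Require Import structures.
From mathcomp Require Import all_boot all_order all_algebra.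
From mathcomp Require Import all_classical all_reals all_analysis.
Set Implicit Arguments. Unset Strict Implicit. Unset Printing Implicit Defensive.
Import Order.TTheory GRing.Theory Num.Theory.
Import numFieldNormedType.Exports.
Local Open Scope ring_scope.

Definition grad (R : realType) (n : nat) (f : 'rV[R]_n -> R) (x : 'rV[R]_n)
  : 'rV[R]_n := \row_(j < n) derive f x (delta_mx 0 j : 'rV[R]_n).

Definition is_norm (R : realType) (n : nat) (N : 'rV[R]_n -> R) : Prop :=
  [/\ forall u v, N (u + v) <= N u + N v,
      forall (a : R) u, N (a *: u) = `|a| * N u
    & forall u, N u = 0 -> u = 0].

Definition favg (R : realType) (n m : nat) (f : 'I_m -> 'rV[R]_n -> R)
  : 'rV[R]_n -> R := fun y => (m%:R)^-1 * \sum_(i < m) f i y.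

(* E[ N (G_k(x)) ], with G_k = (1/k) sum_{i in S} grad f^i and S a uniformly
   random k-element subset of {1..m}. *)
Definition EG (R : realType) (n m : nat) (f : 'I_m -> 'rV[R]_n -> R)
  (N : 'rV[R]_n -> R) (x : 'rV[R]_n) (k : nat) : R :=
  ('C(m, k)%:R)^-1 *
  \sum_(S : {set 'I_m} | #|S| == k)
     N ((k%:R)^-1 *: \sum_(i in S) grad (f i) x).

From HB Require Import structures.
From mathcomp Require Import all_boot all_order all_algebra.
From mathcomp Require Import all_classical all_reals all_analysis.
From mathcomp Require Import zify.

Set Implicit Arguments.
Unset Strict Implicit.
Unset Printing Implicit Defensive.
Import Order.TTheory GRing.Theory Num.Theory.
Import numFieldNormedType.Exports.
Local Open Scope ring_scope.

(* Only the vectors g_i = grad f^i(x) and the seminorm axioms matter.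
   Monotonicity: for |A| = k+1, k * sum_A g is the sum over j in A of
   sum_(A\{j}) g, so by the triangle inequality the norm of the mean over A is
   at most the average over j of the norms of the means over A\{j}; averaging
   over A, every k-set B arises from exactly m-k sets B+{j}, and
   (k+1) C(m,k+1) = (m-k) C(m,k).  Complement bound: k * mean_S g equals
   m * mean g minus (m-k) * mean_(~S) g, and S |-> ~S is a bijection from
   k-sets onto (m-k)-sets. *)

Section SubsetSums.
Variables (T : finType) (M : nmodType).

Lemma sum_card_setD1 (F : {set T} -> M) k :
  \sum_(A : {set T} | #|A| == k.+1) \sum_(j in A) F (A :\ j)
  = (\sum_(B : {set T} | #|B| == k) F B) *+ (#|T| - k).
Proof.
rewrite -sumrMnl.
have -> : \sum_(B : {set T} | #|B| == k) F B *+ (#|T| - k)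
          = \sum_(B : {set T} | #|B| == k) \sum_(j in ~: B) F B.
  apply: eq_bigr => B /eqP cardB.
  by rewrite sumr_const -(cardsC B) cardB addKn.
rewrite (exchange_big_dep predT) //= [RHS](exchange_big_dep predT) //=.
apply: eq_bigr => j _.
rewrite (reindex_onto (fun B => j |: B) (fun A => A :\ j)); last first.
  by move=> A /andP[_ jA]; rewrite finset.setD1K.
apply: eq_big => [B|B /andP[_ /eqP ->] //].
have [jB | jB] := boolP (j \in B).
- rewrite finset.in_setC jB andbF; apply/negbTE/negP => /andP[_ /eqP eB].
  by move: jB; rewrite -eB finset.setD11.
- rewrite finset.in_setC jB finset.setU11 finset.cardsU1 jB.
  by rewrite finset.setU1K // eqxx !andbT.
Qed.

Lemma sum_card_setC (F : {set T} -> M) k : (k <= #|T|)%N ->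
  \sum_(A : {set T} | #|A| == k) F (~: A)
  = \sum_(B : {set T} | #|B| == (#|T| - k)%N) F B.
Proof.
move=> le_kT; rewrite [RHS](reindex_inj (@finset.setC_inj T)) /=.
apply: eq_bigl => A; move: le_kT; rewrite -(cardsC A).
by move: #|A| #|~: A| => a b le_kab; apply/eqP/eqP; lia.
Qed.

Lemma sum_leave_one_out (V : zmodType) (g : T -> V) (A : {set T}) :
  \sum_(j in A) \sum_(i in A :\ j) g i = (\sum_(i in A) g i) *+ #|A|.-1.
Proof.
have [/finset.cards0_eq ->|A_gt0] := posnP #|A|.
  by rewrite !finset.big_set0 mul0rn.
have sum_setD1 j : j \in A -> \sum_(i in A :\ j) g i = \sum_(i in A) g i - g j.
  move=> jA; rewrite [in RHS](bigD1 j jA) /= addrC addrK.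
  by apply: eq_bigl => i; rewrite finset.in_setD1 andbC.
rewrite (eq_bigr _ sum_setD1) sumrB sumr_const.
by rewrite -[in X in _ *+ X](prednK A_gt0) mulrSr addrK.
Qed.

End SubsetSums.

Section SubsetMeanNorm.
Variables (R : numFieldType) (V : lmodType R) (N : V -> R).
Hypothesis N_add : forall u v, N (u + v) <= N u + N v.
Hypothesis N_scale : forall (a : R) u, N (a *: u) = `|a| * N u.

Lemma seminorm0 : N 0 = 0.
Proof. by rewrite -(scale0r (0 : V)) N_scale normr0 mul0r. Qed.

Lemma seminormN u : N (- u) = N u.
Proof. by rewrite -scaleN1r N_scale normrN normr1 mul1r. Qed.

Lemma seminormZ_ge0 (a : R) u : 0 <= a -> N (a *: u) = a * N u.
Proof. by move=> a_ge0; rewrite N_scale ger0_norm. Qed.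

Lemma seminormB_le u v : N (u - v) <= N u + N v.
Proof. by rewrite -(seminormN v) N_add. Qed.

Lemma seminorm_sum (I : Type) (r : seq I) (P : pred I) (F : I -> V) :
  N (\sum_(i <- r | P i) F i) <= \sum_(i <- r | P i) N (F i).
Proof.
elim/big_rec2: _ => [|i y1 y2 _ IH]; first by rewrite seminorm0.
by apply: le_trans (N_add _ _) _; rewrite lerD2l.
Qed.

Variables (m : nat) (g : 'I_m -> V).

Definition expected_subset_mean_norm (k : nat) : R :=
  ('C(m, k)%:R)^-1 *
  \sum_(S : {set 'I_m} | #|S| == k) N ((k%:R)^-1 *: \sum_(i in S) g i).

Local Notation E := expected_subset_mean_norm.

Lemma seminorm_sum_le_leave_one_out (A : {set 'I_m}) k :
  #|A| = k.+1 -> (0 < k)%N ->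
  N (\sum_(i in A) g i) <= \sum_(j in A) N (k%:R^-1 *: \sum_(i in A :\ j) g i).
Proof.
move=> cardA k_gt0.
have -> : \sum_(i in A) g i = \sum_(j in A) k%:R^-1 *: \sum_(i in A :\ j) g i.
  rewrite -scaler_sumr sum_leave_one_out cardA /= -scalerMnr scalerMnl.
  by rewrite -mulr_natr mulVf ?scale1r // pnatr_eq0 -lt0n.
exact: seminorm_sum.
Qed.

Lemma expected_subset_mean_norm_nonincreasing k :
  (0 < k)%N -> (k < m)%N -> E k.+1 <= E k.
Proof.
move=> k_gt0 lt_km.
have mk_neq0 : ((m - k)%:R : R) != 0 by rewrite pnatr_eq0 subn_eq0 -ltnNge.
have binS : ('C(m, k.+1)%:R * k.+1%:R : R) = 'C(m, k)%:R * (m - k)%:R.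
  by rewrite -!natrM mulnC mul_bin_left mulnC.
have double_count :
    \sum_(A : {set 'I_m} | #|A| == k.+1) N (\sum_(i in A) g i)
    <= (\sum_(B : {set 'I_m} | #|B| == k) N (k%:R^-1 *: \sum_(i in B) g i)) *+ (m - k).
  rewrite -[in X in _ *+ (X - _)](card_ord m) -sum_card_setD1.
  by apply: ler_sum => A /eqP cardA; apply: seminorm_sum_le_leave_one_out.
rewrite /E; under eq_bigr => A _ do rewrite seminormZ_ge0 ?invr_ge0 ?ler0n //.
rewrite -mulr_sumr mulrA.
apply: le_trans (ler_wpM2l _ double_count) _; first by rewrite mulr_ge0 ?invr_ge0 ?ler0n.
by rewrite mulrnAr -mulr_natr mulrAC -invfM binS invfM divfK.
Qed.

Lemma seminorm_subset_mean_le_complement (S : {set 'I_m}) k :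
  (0 < k)%N -> (k < m)%N ->
  N (k%:R^-1 *: \sum_(i in S) g i)
  <= m%:R / k%:R * N (m%:R^-1 *: \sum_i g i)
     + (m - k)%:R / k%:R * N ((m - k)%:R^-1 *: \sum_(i in ~: S) g i).
Proof.
move=> k_gt0 lt_km.
have m_neq0 : (m%:R : R) != 0 by rewrite pnatr_eq0 -lt0n (leq_ltn_trans _ lt_km).
have mk_neq0 : ((m - k)%:R : R) != 0 by rewrite pnatr_eq0 subn_eq0 -ltnNge.
have -> : \sum_(i in S) g i = \sum_i g i - \sum_(i in ~: S) g i.
  under [\sum_(i in ~: S) _]eq_bigl do rewrite finset.in_setC.
  by rewrite [\sum_i g i](bigID (mem S)) addrK.
rewrite !seminormZ_ge0 ?invr_ge0 ?ler0n // !mulrA !(mulrAC _ k%:R^-1) !mulfV // !mul1r.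
by rewrite -mulrDl [leRHS]mulrC ler_pM2l ?invr_gt0 ?ltr0n ?seminormB_le.
Qed.

Lemma expected_subset_mean_norm_le_complement k :
  (0 < k)%N -> (k < m)%N ->
  E k <= m%:R / k%:R * N (m%:R^-1 *: \sum_i g i) + (m - k)%:R / k%:R * E (m - k)%N.
Proof.
move=> k_gt0 lt_km.
have bin_neq0 : ('C(m, k)%:R : R) != 0 by rewrite pnatr_eq0 -lt0n bin_gt0 ltnW.
have sum_const (c : R) : \sum_(S : {set 'I_m} | #|S| == k) c = 'C(m, k)%:R * c.
  rewrite mulr_natl -[m in 'C(m, _)]card_ord -card_draws -sumr_const.
  by apply: eq_bigl => S; rewrite finset.inE.
rewrite /E (bin_sub (ltnW lt_km)).
apply: le_trans.
  apply: ler_wpM2l; first by rewrite invr_ge0 ler0n.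
  by apply: ler_sum => S _; apply: seminorm_subset_mean_le_complement.
rewrite big_split /= sum_const -mulr_sumr.
rewrite (@sum_card_setC _ _ (fun S => N ((m - k)%:R^-1 *: \sum_(i in S) g i)))
  card_ord; last exact: ltnW.
by rewrite mulrDr mulKf // mulrCA.
Qed.

End SubsetMeanNorm.

Lemma grad_favg (R : realType) (n m : nat) (f : 'I_m -> 'rV[R]_n -> R) x :
  (forall i, differentiable (f i) x) ->
  grad (favg f) x = m%:R^-1 *: \sum_(i < m) grad (f i) x.
Proof.
move=> df; apply/rowP => j; rewrite !mxE summxE.
have -> : favg f = m%:R^-1 \*: \sum_(i < m) f i.
  by apply/funext => y; rewrite /favg /= fct_sumE.
rewrite deriveZ; last by apply: derivable_sum => i; apply: diff_derivable.
rewrite derive_sum; last by move=> i; apply: diff_derivable.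
by congr (_ * _); apply: eq_bigr => i _; rewrite mxE.
Qed.

Theorem theorem4p6 (R : realType) (n m : nat) (f : 'I_m -> 'rV[R]_n -> R)
  (N : 'rV[R]_n -> R) (x : 'rV[R]_n) :
  (forall i y, differentiable (f i) y) ->
  is_norm N ->
  (forall k : nat, (1 <= k)%N -> (k < m)%N -> EG f N x k.+1 <= EG f N x k) /\
  (forall k : nat, (1 <= k)%N -> (k <= m - 1)%N ->
     EG f N x k <= (m%:R / k%:R) * N (grad (favg f) x)
                   + ((m - k)%:R / k%:R) * EG f N x (m - k)).
Proof.
move=> df [N_add N_scale _].
have EG_expected k :
  EG f N x k = expected_subset_mean_norm N (fun i => grad (f i) x) k by [].
split=> k k_gt0 lt_km; rewrite !EG_expected.
  by apply: expected_subset_mean_norm_nonincreasing.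
rewrite grad_favg //; apply: expected_subset_mean_norm_le_complement => //; lia.
Qed.
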